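(* Consider the two-party spatial voting game with abstention described in the context. Suppose (1) both parties' preferences are single-peaked, and (2) the parties agree on cross-side comparisons: for all positive integers $a,b$ such that the relevant policies belong to $X$, \[ R_A(a)\succeq_A L_A(b)\iff R_B(a)\succeq_B L_B(b) \quad\text{and}\quad L_A(b)\succeq_A R_A(a)\iff L_B(b)\succeq_B R_B(a). \] Then no pure-strategy Nash equilibrium exhibits mutual leapfrogging, i.e. there is no pure-strategy Nash equilibrium $(s,t)$ with $t<\tau_A<\tau_B<s$.
   Context: Policy space: $X=\{x_j : j\in I\}$ where $I\subseteq\mathbb Z$ is an interval of integers and $x_j<x_{j+1}$; $X$ is linearly ordered by $<$. Parties: two parties $A$ and $B$ with ideal points $\tau_A=x_p$ and $\tau_B=x_q$, where $p<q$. Each party $i\in\{A,B\}$ has a weak preference order $\succeq_i$ on $X$ with unique ideal point $\tau_i$; $x\succ_i y$ means $x\succeq_i y$ and not $y\succeq_i x$. Single-peakedness of $\succeq_i$: if $x_a<x_b\le\tau_i$ then $x_b\succ_i x_a$, and if $\tau_i\le x_b<x_a$ then $x_b\succ_i x_a$. Ordinal displacements: if $\tau_i=x_c$ and $k$ is a positive integer, $R_i(k)=x_{c+k}$ and $L_i(k)=x_{c-k}$ whenever these belong to $X$. Voters: a finite electorate $V$. Each voter $v\in V$ has an ideal point $\theta_v\in X$, strict single-peaked preferences over $X$ with peak $\theta_v$, and an attraction interval $A_v\subseteq X$, an interval of the order on $X$ containing $\theta_v$. Election: party $A$ chooses $s\in X$, party $B$ chooses $t\in X$. Voter $v$ is active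 at $(s,t)$ if $s\in A_v$ or $t\in A_v$. An active voter votes for the platform she strictly prefers and abstains if indifferent (in particular if $s=t$); inactive voters abstain. $N_A(s,t)$ (resp. $N_B(s,t)$) is the number of active voters strictly preferring $s$ to $t$ (resp. $t$ to $s$). The outcome $g(s,t)$ is $A$ if $N_A>N_B$, $B$ if $N_B>N_A$, and $T$ (tie) if equal. Party objectives (lexicographic): Win $\succ$ Tie $\succ$ Lose for each party (outcome $A$ is a win for $A$ and a loss for $B$, and vice versa); between profiles with the same electoral outcome, $A$ weakly prefers $(s,t)$ to $(s',t')$ iff $s\succeq_A s'$, and $B$ iff $t\succeq_B t'$. A pure-strategy Nash equilibrium is a profile at which neither party has a strictly preferred unilateral deviation. *)

(* Policies x_j are identified with their integer indices j : int;
   the policy space X is given by its index set I (a predicate on int), an interval. *)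
From mathcomp Require Import all_boot all_order all_algebra.
Set Implicit Arguments. Unset Strict Implicit. Unset Printing Implicit Defensive.
Import Order.TTheory GRing.Theory Num.Theory.
Local Open Scope ring_scope.

Definition int_interval (I : int -> bool) : Prop :=
  forall a b c : int, I a -> I c -> a <= b -> b <= c -> I b.

Definition weak_order (I : int -> bool) (R : int -> int -> bool) : Prop :=
  (forall x y, I x -> I y -> R x y || R y x) /\
  (forall x y z, I x -> I y -> I z -> R x y -> R y z -> R x z).

Definition spref (R : int -> int -> bool) (x y : int) : bool := R x y && ~~ R y x.

Definition unique_ideal (I : int -> bool) (R : int -> int -> bool) (tau : int) : Prop :=
  I tau /\ forall x, I x -> x != tau -> spref R tau x.

Definition single_peaked (I : int -> bool) (R : int -> int -> bool) (tau : int) : Prop :=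
  (forall a b, I a -> I b -> a < b -> b <= tau -> spref R b a) /\
  (forall a b, I a -> I b -> tau <= b -> b < a -> spref R b a).

(* strict (linear) order P on X : P x y means "x strictly preferred to y" *)
Definition strict_linear_order (I : int -> bool) (P : int -> int -> bool) : Prop :=
  (forall x, I x -> ~~ P x x) /\
  (forall x y, I x -> I y -> P x y -> ~~ P y x) /\
  (forall x y, I x -> I y -> x != y -> P x y || P y x) /\
  (forall x y z, I x -> I y -> I z -> P x y -> P y z -> P x z).

Definition strict_single_peaked (I : int -> bool) (P : int -> int -> bool) (th : int) : Prop :=
  strict_linear_order I P /\ I th /\
  (forall a b, I a -> I b -> a < b -> b <= th -> P b a) /\
  (forall a b, I a -> I b -> th <= b -> b < a -> P b a).

Definition attraction_interval (I : int -> bool) (Av : int -> bool) (th : int) : Prop :=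
  (forall x, Av x -> I x) /\
  (forall a b c, Av a -> Av c -> a <= b -> b <= c -> Av b) /\ Av th.

Inductive outcome := WinA | WinB | Tie.

Section Game.
Variables (V : finType) (P : V -> int -> int -> bool) (Att : V -> int -> bool).

Definition active (v : V) (s t : int) : bool := Att v s || Att v t.

Definition NA (s t : int) : nat := #|[set v | active v s t && P v s t]|.
Definition NB (s t : int) : nat := #|[set v | active v s t && P v t s]|.

Definition g (s t : int) : outcome :=
  if (NB s t < NA s t)%N then WinA
  else if (NA s t < NB s t)%N then WinB else Tie.
End Game.

Definition rankA (o : outcome) : nat := match o with WinA => 2 | Tie => 1 | WinB => 0 end.
Definition rankB (o : outcome) : nat := match o with WinB => 2 | Tie => 1 | WinA => 0 end.

Definition A_strictly_prefers (RA : int -> int -> bool) (g : int -> int -> outcome)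
  (s t s' t' : int) : Prop :=
  (rankA (g s' t') < rankA (g s t))%N \/
  (g s t = g s' t' /\ spref RA s s').

Definition B_strictly_prefers (RB : int -> int -> bool) (g : int -> int -> outcome)
  (s t s' t' : int) : Prop :=
  (rankB (g s' t') < rankB (g s t))%N \/
  (g s t = g s' t' /\ spref RB t t').

Definition nash (I : int -> bool) (RA RB : int -> int -> bool) (g : int -> int -> outcome)
  (s t : int) : Prop :=
  I s /\ I t /\
  (forall s', I s' -> ~ A_strictly_prefers RA g s' t s t) /\
  (forall t', I t' -> ~ B_strictly_prefers RB g s t' s t).

From mathcomp Require Import all_boot all_order all_algebra.
From mathcomp Require Import zify.
Set Implicit Arguments.
Unset Strict Implicit.
Unset Printing Implicit Defensive.
Import Order.TTheory GRing.Theory Num.Theory.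
Local Open Scope ring_scope.

(* Each party can always force a tie by imitating its opponent, so a Nash
   equilibrium (s, t) is a tie at which neither party strictly prefers the
   opponent's platform: A weakly prefers s to t and B does not strictly prefer
   s to t.  In a leapfrog profile t < p < q < s put a = s - q and b = p - t.
   Single-peakedness gives p + a >_A s >=_A t, the cross-side agreement turns
   p + a >_A p - b into s = q + a >_B q - b, and single-peakedness again gives
   q - b >_B t, so s >_B t after all.  Nothing about the voters is used beyond
   the fact that identical platforms tie. *)

Lemma g_diag (V : finType) (P : V -> int -> int -> bool) (Att : V -> int -> bool)
    (x : int) :
  g P Att x x = Tie.
Proof. by rewrite /g ltnn. Qed.

Section WeakOrder.
Variables (I : int -> bool) (R : int -> int -> bool).
Hypothesis R_weak : weak_order I R.

Lemma weak_order_not_spref x y : I x -> I y -> ~~ spref R y x -> R x y.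
Proof.
move=> Ix Iy; rewrite /spref negb_and negbK.
by case/orP: (R_weak.1 x y Ix Iy) => [-> | ->]; rewrite ?orbT.
Qed.

Lemma spref_le_trans x y z :
  I x -> I y -> I z -> spref R x y -> R y z -> spref R x z.
Proof.
move=> Ix Iy Iz /andP[Rxy nRyx] Ryz; apply/andP; split.
  exact: (R_weak.2 x y z).
by apply: contra nRyx => Rzx; apply: (R_weak.2 y z x).
Qed.

Lemma spref_trans x y z :
  I x -> I y -> I z -> spref R x y -> spref R y z -> spref R x z.
Proof. by move=> Ix Iy Iz sxy /andP[Ryz _]; apply: (spref_le_trans Ix Iy). Qed.

End WeakOrder.

Section Equilibrium.
Variables (I : int -> bool) (RA RB : int -> int -> bool) (g : int -> int -> outcome).
Hypothesis tie_diag : forall x, g x x = Tie.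

Lemma nash_tie s t : nash I RA RB g s t -> g s t = Tie.
Proof.
move=> [Is [It [noA noB]]].
have := noA t It; have := noB s Is.
rewrite /A_strictly_prefers /B_strictly_prefers !tie_diag.
by case: (g s t) => //= [nB _ | _ nA]; [case: nB | case: nA]; left.
Qed.

Lemma nash_not_spref_imitateA s t : nash I RA RB g s t -> ~~ spref RA t s.
Proof.
move=> eq_st; have [_ [It [noA _]]] := eq_st.
by apply/negP => sts; apply: (noA t It); right; rewrite tie_diag nash_tie.
Qed.

Lemma nash_not_spref_imitateB s t : nash I RA RB g s t -> ~~ spref RB s t.
Proof.
move=> eq_st; have [Is [_ [_ noB]]] := eq_st.
by apply/negP => sst; apply: (noB s Is); right; rewrite tie_diag nash_tie.
Qed.

End Equilibrium.

Section Leapfrog.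
Variables (I : int -> bool) (RA RB : int -> int -> bool) (p q : int).
Hypotheses (I_interval : int_interval I) (lt_pq : p < q).
Hypotheses (RA_weak : weak_order I RA) (RB_weak : weak_order I RB).
Hypotheses (RA_peak : single_peaked I RA p) (RB_peak : single_peaked I RB q).
Hypothesis cross_side : forall a b : nat, (0 < a)%N -> (0 < b)%N ->
  I (p + a%:Z) -> I (p - b%:Z) -> I (q + a%:Z) -> I (q - b%:Z) ->
  (RA (p + a%:Z) (p - b%:Z) <-> RB (q + a%:Z) (q - b%:Z)) /\
  (RA (p - b%:Z) (p + a%:Z) <-> RB (q - b%:Z) (q + a%:Z)).

Lemma cross_side_spref (a b : int) : 0 < a -> 0 < b ->
  I (p + a) -> I (p - b) -> I (q + a) -> I (q - b) ->
  spref RA (p + a) (p - b) -> spref RB (q + a) (q - b).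
Proof.
move=> a_gt0 b_gt0; rewrite -[a]gtz0_abs // -[b]gtz0_abs //.
have abs_gt0 c : 0 < c -> (0 < `|c|)%N by lia.
move=> Ipa Ipb Iqa Iqb.
have [toB toA] := cross_side (abs_gt0 _ a_gt0) (abs_gt0 _ b_gt0) Ipa Ipb Iqa Iqb.
rewrite /spref => /andP[/toB -> nA] /=.
by apply: contra nA => /toA.
Qed.

Lemma leapfrog_sprefB s t : t < p -> q < s -> I s -> I t ->
  RA s t -> spref RB s t.
Proof.
move=> lt_tp lt_qs Is It RAst.
have I_between x : t <= x <= s -> I x by case/andP; apply: I_interval.
have Ipa : I (p + (s - q)) by apply: I_between; lia.
have Iqb : I (q - (p - t)) by apply: I_between; lia.
have A_pa_s : spref RA (p + (s - q)) s by apply: RA_peak.2 => //; lia.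
have A_pa_t : spref RA (p + (s - q)) t by apply: (spref_le_trans RA_weak _ Is).
have B_s_qb : spref RB s (q - (p - t)).
  have [Es Et] : q + (s - q) = s /\ p - (p - t) = t by split; lia.
  have := @cross_side_spref (s - q) (p - t); rewrite Es Et.
  by apply; rewrite ?subr_gt0.
have B_qb_t : spref RB (q - (p - t)) t by apply: RB_peak.1 => //; lia.
exact: (spref_trans RB_weak Is Iqb).
Qed.

End Leapfrog.

Theorem theorem1
  (I : int -> bool) (RA RB : int -> int -> bool) (p q : int)
  (V : finType) (theta : V -> int) (P : V -> int -> int -> bool) (Att : V -> int -> bool) :
  int_interval I ->
  p < q ->
  weak_order I RA -> weak_order I RB ->
  unique_ideal I RA p -> unique_ideal I RB q ->
  (forall v, strict_single_peaked I (P v) (theta v)) ->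
  (forall v, attraction_interval I (Att v) (theta v)) ->
  (* (1) single-peaked party preferences *)
  single_peaked I RA p -> single_peaked I RB q ->
  (* (2) agreement on cross-side comparisons *)
  (forall a b : nat, (0 < a)%N -> (0 < b)%N ->
     I (p + a%:Z) -> I (p - b%:Z) -> I (q + a%:Z) -> I (q - b%:Z) ->
     (RA (p + a%:Z) (p - b%:Z) <-> RB (q + a%:Z) (q - b%:Z)) /\
     (RA (p - b%:Z) (p + a%:Z) <-> RB (q - b%:Z) (q + a%:Z))) ->
  ~ exists s t : int,
      nash I RA RB (g P Att) s t /\ t < p /\ p < q /\ q < s.
Proof.
move=> I_interval lt_pq RA_weak RB_weak _ _ _ _ RA_peak RB_peak cross_side.
move=> [s [t [eq_st [lt_tp [_ lt_qs]]]]].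
have [Is [It _]] := eq_st.
have RAst : RA s t.
  apply: (weak_order_not_spref RA_weak Is It).
  exact: (nash_not_spref_imitateA (g_diag P Att) eq_st).
have := nash_not_spref_imitateB (g_diag P Att) eq_st.
by rewrite (leapfrog_sprefB I_interval lt_pq RA_weak RB_weak RA_peak RB_peak
  cross_side lt_tp lt_qs Is It RAst).
Qed.
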